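(* Let $\psi'$ be a differentiable strongly convex function, let $G(\pi_i,\pi_i')=D_{\psi'}(\pi_i,\pi_i')$, and fix $\mu>0$. For any $\sigma\in\mathcal X$ and any Nash equilibrium $\pi^*\in\Pi^*$ of the original game, $$D_{\psi'}(\pi^*,\pi^{\mu,\sigma})-D_{\psi'}(\pi^*,\sigma)\le-D_{\psi'}(\pi^{\mu,\sigma},\sigma).$$ In particular, if $\sigma^{k+1}=\pi^{\mu,\sigma^k}$, then $D_{\psi'}(\pi^*,\sigma^{k+1})-D_{\psi'}(\pi^*,\sigma^k)\le-D_{\psi'}(\sigma^{k+1},\sigma^k)$ for all $k\ge0$.
   Context: Game. Let $N\ge1$. For each $i\in[N]$, $\mathcal X_i\subseteq\mathbb R^{d_i}$ is a nonempty compact convex set, and $\mathcal X=\prod_i\mathcal X_i$. Each $v_i:\mathcal X\to\mathbb R$ is differentiable, with block gradient $\nabla_{\pi_i}v_i$. The game is monotone: $\sum_i\langle\nabla_{\pi_i}v_i(\pi)-\nabla_{\pi_i}v_i(\pi'),\pi_i-\pi_i'\rangle\le0$ for all $\pi,\pi'$. A Nash equilibrium is a $\pi^*$ with $v_i(\pi^* )\ge v_i(\pi_i,\pi^*_{-i})$ for all $i$ and $\pi_i\in\mathcal X_i$. $\Pi^*$ is the set of Nash equilibria. Bregman divergence: $D_{\psi'}(x,y)=\psi'(x)-\psi'(y)-\langle\nabla\psi'(y),x-y\rangle$, and $D_{\psi'}(\pi,\pi')=\sum_iD_{\psi'}(\pi_i,\pi_i')$. Perturbed equilibrium. For $\mu>0$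 and $\sigma\in\mathcal X$, $\pi^{\mu,\sigma}$ is the profile with $\pi_i^{\mu,\sigma}\in\arg\max_{\pi_i\in\mathcal X_i}\{v_i(\pi_i,\pi^{\mu,\sigma}_{-i})-\mu G(\pi_i,\sigma_i)\}$ for all $i$. *)

From HB Require Import structures.
From mathcomp Require Import all_boot all_order all_algebra.
From mathcomp Require Import all_classical all_reals all_analysis.
Set Implicit Arguments. Unset Strict Implicit. Unset Printing Implicit Defensive.
Import Order.TTheory GRing.Theory Num.Theory.
Import numFieldNormedType.Exports.
Local Open Scope ring_scope.
Local Open Scope classical_set_scope.

Section Defs.
Variable R : realType.

Definition dotv (n : nat) (a b : 'rV[R]_n) : R := \sum_(j < n) a 0 j * b 0 j.
Definition sqn (n : nat) (a : 'rV[R]_n) : R := dotv a a.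

Definition is_grad (n : nat) (f : 'rV[R]_n -> R) (x g : 'rV[R]_n) : Prop :=
  forall e : R, 0 < e -> exists2 del : R, 0 < del &
    forall y, Num.sqrt (sqn (y - x)) < del ->
      `|f y - f x - dotv g (y - x)| <= e * Num.sqrt (sqn (y - x)).

Definition strongly_convex (n : nat) (psi : 'rV[R]_n -> R)
    (gpsi : 'rV[R]_n -> 'rV[R]_n) : Prop :=
  exists2 rho : R, 0 < rho & forall x y,
    psi y + dotv (gpsi y) (x - y) + rho / 2 * sqn (x - y) <= psi x.

Definition bregman (n : nat) (psi : 'rV[R]_n -> R) (gpsi : 'rV[R]_n -> 'rV[R]_n)
    (x y : 'rV[R]_n) : R :=
  psi x - psi y - dotv (gpsi y) (x - y).

Variables (N : nat) (d : 'I_N -> nat).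

Definition profile := forall i : 'I_N, 'rV[R]_(d i).

Definition psub (p q : profile) : profile := fun i => p i - q i.
Definition pdot (g p : profile) : R := \sum_(i < N) dotv (g i) (p i).
Definition psqn (p : profile) : R := \sum_(i < N) sqn (p i).

Definition is_pgrad (f : profile -> R) (p g : profile) : Prop :=
  forall e : R, 0 < e -> exists2 del : R, 0 < del &
    forall q, Num.sqrt (psqn (psub q p)) < del ->
      `|f q - f p - pdot g (psub q p)| <= e * Num.sqrt (psqn (psub q p)).

(* (x, p_{-i}) : the profile p with player i's strategy replaced by x. *)
Definition upd (p : profile) (i : 'I_N) (x : 'rV[R]_(d i)) : profile :=
  @dfwith _ (fun j : 'I_N => 'rV[R]_(d j)) p i x.

Definition in_profile (X : forall i : 'I_N, set 'rV[R]_(d i)) (p : profile) : Prop :=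
  forall i, X i (p i).

Definition is_block_grad (v : profile -> R) (i : 'I_N) (p : profile)
    (gvi : 'rV[R]_(d i)) : Prop :=
  exists g : profile, is_pgrad v p g /\ g i = gvi.

Definition monotone_game (X : forall i : 'I_N, set 'rV[R]_(d i))
    (gv : forall i : 'I_N, profile -> 'rV[R]_(d i)) : Prop :=
  forall p q, in_profile X p -> in_profile X q ->
    \sum_(i < N) dotv (gv i p - gv i q) (p i - q i) <= 0.

Definition is_nash (X : forall i : 'I_N, set 'rV[R]_(d i))
    (v : 'I_N -> profile -> R) (ps : profile) : Prop :=
  in_profile X ps /\
  forall i (x : 'rV[R]_(d i)), X i x -> v i (upd ps x) <= v i ps.

Definition pbregman (psi : forall i : 'I_N, 'rV[R]_(d i) -> R)
    (gpsi : forall i : 'I_N, 'rV[R]_(d i) -> 'rV[R]_(d i)) (p q : profile) : R :=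
  \sum_(i < N) bregman (psi i) (gpsi i) (p i) (q i).

Definition is_perturbed_eq (X : forall i : 'I_N, set 'rV[R]_(d i))
    (v : 'I_N -> profile -> R)
    (psi : forall i : 'I_N, 'rV[R]_(d i) -> R)
    (gpsi : forall i : 'I_N, 'rV[R]_(d i) -> 'rV[R]_(d i))
    (mu : R) (sigma p : profile) : Prop :=
  in_profile X p /\
  forall i (x : 'rV[R]_(d i)), X i x ->
    v i (upd p x) - mu * bregman (psi i) (gpsi i) x (sigma i)
      <= v i p - mu * bregman (psi i) (gpsi i) (p i) (sigma i).

End Defs.

From HB Require Import structures.
From mathcomp Require Import all_boot all_order all_algebra.
From mathcomp Require Import all_classical all_reals all_analysis.
From mathcomp Require Import lra ring.
Import Order.TTheory GRing.Theory Num.Theory.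
Import numFieldNormedType.Exports.
Set Implicit Arguments. Unset Strict Implicit.
Local Open Scope ring_scope.
Local Open Scope classical_set_scope.

(* Proof idea (the Bregman "three-point" argument for proximal point steps).
   1. First-order optimality: if x maximizes a differentiable f over a convex
      set A, then <grad f(x), y - x> <= 0 for every y in A.
   2. Applied blockwise, this gives two variational inequalities: at a Nash
      equilibrium ps, <gv_i(ps), q_i - ps_i> <= 0; at the perturbed equilibrium
      pmu, <gv_i(pmu) - mu (grad psi_i(pmu_i) - grad psi_i(sigma_i)),
      q_i - pmu_i> <= 0 (the gradient of x |-> D(x, s) is grad psi(x) - grad psi(s)).
   3. Three-point identity: D(p,q) - D(p,s) + D(q,s) = -<grad psi(q) - grad psi(s), p - q>.
   4. Chaining (2) with q := pmu resp. q := ps and monotonicity of the game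
      shows sum_i <grad psi_i(pmu_i) - grad psi_i(sigma_i), ps_i - pmu_i> >= 0
      (this uses mu > 0), which by (3) is exactly the claimed inequality.
   The iterated statement is the one-step inequality with sigma := sigma^k. *)

Section InnerProduct.
Variables (R : realType) (n : nat).
Implicit Types (a b g : 'rV[R]_n) (t : R).

Lemma dotvDr g a b : dotv g (a + b) = dotv g a + dotv g b.
Proof. by rewrite /dotv -big_split; apply: eq_bigr => j _; rewrite mxE mulrDr. Qed.

Lemma dotvDl g a b : dotv (a + b) g = dotv a g + dotv b g.
Proof. by rewrite /dotv -big_split; apply: eq_bigr => j _; rewrite mxE mulrDl. Qed.

Lemma dotvZr g a t : dotv g (t *: a) = t * dotv g a.
Proof. by rewrite /dotv mulr_sumr; apply: eq_bigr => j _; rewrite mxE mulrCA. Qed.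

Lemma dotvZl g a t : dotv (t *: a) g = t * dotv a g.
Proof. by rewrite /dotv mulr_sumr; apply: eq_bigr => j _; rewrite mxE mulrA. Qed.

Lemma dotvBr g a b : dotv g (a - b) = dotv g a - dotv g b.
Proof. by rewrite dotvDr -scaleN1r dotvZr mulN1r. Qed.

Lemma dotvBl g a b : dotv (a - b) g = dotv a g - dotv b g.
Proof. by rewrite dotvDl -scaleN1r dotvZl mulN1r. Qed.

Lemma dotv0r g : dotv g 0 = 0.
Proof. by rewrite -(scale0r (0 : 'rV[R]_n)) dotvZr mul0r. Qed.

Lemma sqrt_sqnZ a t : 0 <= t -> Num.sqrt (sqn (t *: a)) = t * Num.sqrt (sqn a).
Proof.
move=> t0; rewrite /sqn dotvZr dotvZl mulrA -expr2 sqrtrM ?sqr_ge0 //.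
by rewrite sqrtr_sqr ger0_norm.
Qed.

End InnerProduct.

Lemma convex_segment (R : realType) n (A : set 'rV[R]_n) x y t :
  convex_set A -> A x -> A y -> 0 < t -> t <= 1 -> A (x + t *: (y - x)).
Proof.
move=> cA Ax Ay t0 t1.
have := cA y x (Itv01 (ltW t0) t1) (mem_set Ay) (mem_set Ax).
rewrite in_setE; congr A; set z := conv _ _ _.
have -> : z = t *: y + (1 - t) *: x :> 'rV[R]_n by [].
by rewrite scalerBl scale1r scalerBr addrC -!addrA [X in _ + X]addrC.
Qed.

Section Gradients.
Variables (R : realType) (n : nat).
Implicit Types (f F G psi : 'rV[R]_n -> R) (x g w : 'rV[R]_n).

(* One-sided first-order condition: if f does not increase along the
   segment from x to x + w, its directional derivative <g, w> is <= 0.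
   Otherwise the linear term t <g, w> dominates the o(t) remainder. *)
Lemma grad_dir_nonpos f x g w :
  is_grad f x g ->
  (forall t, 0 < t -> t <= 1 -> f (x + t *: w) <= f x) ->
  dotv g w <= 0.
Proof.
move=> hg hmax; rewrite leNgt; apply/negP => c0.
set c := dotv g w in c0; set s := Num.sqrt (sqn w).
have s0 : 0 <= s by rewrite sqrtr_ge0.
have K0 : 0 < s + 1 by rewrite ltr_wpDl.
have e0 : 0 < c / 2 / (s + 1) by rewrite !divr_gt0.
have [del del0 hd] := hg _ e0.
set t := Num.min 1 (del / 2 / (s + 1)).
have t0 : 0 < t by rewrite lt_min ltr01 !divr_gt0.
have t1 : t <= 1 by rewrite ge_min lexx.
have t_small : t * s < del.
  apply: (le_lt_trans (y := t * (s + 1))).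
    by apply: ler_wpM2l; [exact: ltW | rewrite lerDl].
  apply: (le_lt_trans (y := del / 2 / (s + 1) * (s + 1))).
    by apply: ler_wpM2r; [exact: ltW | rewrite ge_min lexx orbT].
  by rewrite divfK ?gt_eqF // ltr_pdivrMr // ltr_pMr // ltr1n.
have := hd (x + t *: w).
rewrite addrAC subrr add0r (sqrt_sqnZ w (ltW t0)) -/s dotvZr => /(_ t_small) remainder.
have not_increase := hmax t t0 t1.
have linear_le : t * c <= c / 2 / (s + 1) * (t * s).
  apply: le_trans remainder; rewrite -normrN; apply: le_trans (ler_norm _).
  rewrite -/c; lra.
have bound_le : c / 2 / (s + 1) * (t * s) <= c / 2 * t.
  have -> : c / 2 / (s + 1) * (t * s) = (c / 2 * t) * (s / (s + 1)) by ring.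
  apply: ler_piMr; first by rewrite mulr_ge0 ?divr_ge0 ?ltW.
  by rewrite ler_pdivrMr // mul1r lerDl.
have : t * c <= c / 2 * t by apply: le_trans bound_le.
rewrite mulrC ler_pM2r //; lra.
Qed.

Lemma grad_max_convex f (A : set 'rV[R]_n) x g y :
  convex_set A -> A x -> A y -> is_grad f x g ->
  (forall z, A z -> f z <= f x) -> dotv g (y - x) <= 0.
Proof.
move=> cA Ax Ay hg hmax; apply: grad_dir_nonpos hg _ => t t0 t1.
by apply: hmax; apply: convex_segment.
Qed.

Lemma is_grad_subZ F G x a b mu :
  is_grad F x a -> is_grad G x b ->
  is_grad (fun y => F y - mu * G y) x (a - mu *: b).
Proof.
move=> hF hG e e0.
have K0 : 0 < 1 + `|mu| by rewrite ltr_pwDl.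
have e10 : 0 < e / (1 + `|mu|) by rewrite divr_gt0.
have [d1 d10 h1] := hF _ e10; have [d2 d20 h2] := hG _ e10.
exists (Num.min d1 d2); first by rewrite lt_min d10.
move=> y; rewrite lt_min => /andP [y1 y2].
have remF := h1 y y1; have remG := h2 y y2.
set s := Num.sqrt _ in remF remG *; set e1 := e / (1 + `|mu|) in remF remG e10.
have -> : F y - mu * G y - (F x - mu * G x) - dotv (a - mu *: b) (y - x)
  = (F y - F x - dotv a (y - x)) - mu * (G y - G x - dotv b (y - x)).
  by rewrite dotvBl dotvZl; ring.
apply: le_trans (ler_normB _ _) _; rewrite normrM.
have s0 : 0 <= s by rewrite sqrtr_ge0.
have : `|mu| * `|G y - G x - dotv b (y - x)| <= `|mu| * (e1 * s) by rewrite ler_wpM2l.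
have -> : e = e1 * (1 + `|mu|) by rewrite divfK ?gt_eqF.
move=> scaled_remG; lra.
Qed.

Lemma bregman_grad psi gpsi x s :
  is_grad psi x (gpsi x) ->
  is_grad (fun y => bregman psi gpsi y s) x (gpsi x - gpsi s).
Proof.
move=> h e e0; have [del d0 hd] := h e e0; exists del => // y hy.
have := hd y hy; congr (_ <= _); congr `|_|.
rewrite /bregman dotvBl !dotvBr; ring.
Qed.

Lemma bregman_three_point psi gpsi p q s :
  bregman psi gpsi p q - bregman psi gpsi p s + bregman psi gpsi q s
    = - dotv (gpsi q - gpsi s) (p - q).
Proof. by rewrite /bregman !dotvBl !dotvBr; ring. Qed.

End Gradients.

Section Profiles.
Variables (R : realType) (N : nat) (d : 'I_N -> nat).
Implicit Types (p g : profile R d) (f : profile R d -> R).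

Lemma upd_id p i : upd p (p i) = p.
Proof. by apply: functional_extensionality_dep => j; rewrite /upd; case: dfwithP. Qed.

Lemma psqn_upd p i (y : 'rV[R]_(d i)) : psqn (psub (upd p y) p) = sqn (y - p i).
Proof.
rewrite /psqn /psub (bigD1 i) //= /upd dfwithin big1 ?addr0 // => j ji.
by rewrite dfwithout 1?eq_sym // subrr /sqn dotv0r.
Qed.

Lemma pdot_upd g p i (y : 'rV[R]_(d i)) :
  pdot g (psub (upd p y) p) = dotv (g i) (y - p i).
Proof.
rewrite /pdot /psub (bigD1 i) //= /upd dfwithin big1 ?addr0 // => j ji.
by rewrite dfwithout 1?eq_sym // subrr dotv0r.
Qed.

Lemma block_grad_partial f p i (gi : 'rV[R]_(d i)) :
  is_block_grad f p gi -> is_grad (fun y => f (upd p y)) (p i) gi.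
Proof.
move=> [g [hg <-]] e e0; have [del d0 hd] := hg e e0; exists del => // y.
by rewrite upd_id -psqn_upd -pdot_upd; exact: hd.
Qed.

End Profiles.

Section PerturbedStep.
Local Unset Implicit Arguments.
Variables (R : realType) (N : nat) (d : 'I_N -> nat).
Variables (X : forall i : 'I_N, set 'rV[R]_(d i)) (v : 'I_N -> profile R d -> R).
Variable gv : forall i : 'I_N, profile R d -> 'rV[R]_(d i).
Variable psi : forall i : 'I_N, 'rV[R]_(d i) -> R.
Variable gpsi : forall i : 'I_N, 'rV[R]_(d i) -> 'rV[R]_(d i).
Hypothesis X_convex : forall i : 'I_N, convex_set (X i).
Hypothesis v_grad : forall i p, in_profile X p -> is_block_grad (v i) p (gv i p).
Local Set Implicit Arguments.

Lemma nash_vi ps q i :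
  is_nash X v ps -> in_profile X q -> dotv (gv i ps) (q i - ps i) <= 0.
Proof.
move=> [psX psN] qX.
apply: grad_max_convex (X_convex i) (psX i) (qX i) (block_grad_partial (v_grad i ps psX)) _.
by move=> z Xz; rewrite upd_id; exact: psN.
Qed.

Lemma perturbed_vi (psi_grad : forall i x, is_grad (psi i) x (gpsi i x))
    mu sigma pmu q i :
  is_perturbed_eq X v psi gpsi mu sigma pmu -> in_profile X q ->
  dotv (gv i pmu) (q i - pmu i)
    <= mu * dotv (gpsi i (pmu i) - gpsi i (sigma i)) (q i - pmu i).
Proof.
move=> [pmX pmE] qX; rewrite -subr_le0 -dotvZl -dotvBl.
have penalized_grad := is_grad_subZ mu (block_grad_partial (v_grad i pmu pmX))
  (bregman_grad (sigma i) (psi_grad i (pmu i))).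
apply: grad_max_convex (X_convex i) (pmX i) (qX i) penalized_grad _.
by move=> z Xz; rewrite upd_id; exact: pmE.
Qed.

Lemma perturbed_step_bregman (psi_grad : forall i x, is_grad (psi i) x (gpsi i x))
    mu sigma ps pmu :
  monotone_game X gv -> 0 < mu ->
  is_nash X v ps -> is_perturbed_eq X v psi gpsi mu sigma pmu ->
  pbregman psi gpsi ps pmu - pbregman psi gpsi ps sigma
    <= - pbregman psi gpsi pmu sigma.
Proof.
move=> mono mu0 nash pert.
have psX := nash.1; have pmX := pert.1.
pose c i := dotv (gpsi i (pmu i) - gpsi i (sigma i)) (ps i - pmu i).
have three_point : pbregman psi gpsi ps pmu - pbregman psi gpsi ps sigma
    + pbregman psi gpsi pmu sigma = - \sum_(i < N) c i.
  rewrite /pbregman -sumrB -big_split -sumrN.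
  by apply: eq_bigr => i _; exact: bregman_three_point.
have nash_sum : 0 <= \sum_(i < N) dotv (gv i ps) (ps i - pmu i).
  apply: sumr_ge0 => i _.
  rewrite -[ps i - pmu i]opprB -scaleN1r dotvZr mulN1r oppr_ge0; exact: nash_vi.
have mono_sum : \sum_(i < N) dotv (gv i ps) (ps i - pmu i)
    <= \sum_(i < N) dotv (gv i pmu) (ps i - pmu i).
  rewrite -subr_ge0 -sumrB
    (eq_bigr (fun i => - dotv (gv i pmu - gv i ps) (pmu i - ps i))).
    by rewrite sumrN oppr_ge0; exact: mono.
  by move=> i _; rewrite !dotvBl !dotvBr; ring.
have pert_sum : \sum_(i < N) dotv (gv i pmu) (ps i - pmu i) <= mu * \sum_(i < N) c i.
  by rewrite mulr_sumr; apply: ler_sum => i _; exact: perturbed_vi.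
have c_ge0 : 0 <= \sum_(i < N) c i.
  by rewrite -(pmulr_rge0 _ mu0); apply: le_trans nash_sum (le_trans mono_sum pert_sum).
move: c_ge0 three_point; set S := \sum_(i < N) c i; lra.
Qed.

End PerturbedStep.

Theorem lemma9 (R : realType) (N : nat) (d : 'I_N -> nat)
  (X : forall i : 'I_N, set 'rV[R]_(d i))
  (v : 'I_N -> profile R d -> R)
  (gv : forall i : 'I_N, profile R d -> 'rV[R]_(d i))
  (psi : forall i : 'I_N, 'rV[R]_(d i) -> R)
  (gpsi : forall i : 'I_N, 'rV[R]_(d i) -> 'rV[R]_(d i))
  (mu : R) :
  (0 < N)%N ->
  (forall i, X i !=set0) ->
  (forall i, compact (X i)) ->
  (forall i, convex_set (X i)) ->
  (forall i p, in_profile X p -> is_block_grad (v i) p (gv i p)) ->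
  monotone_game X gv ->
  (forall i x, is_grad (psi i) x (gpsi i x)) ->
  (forall i, strongly_convex (psi i) (gpsi i)) ->
  0 < mu ->
  (forall (sigma ps pmu : profile R d),
      in_profile X sigma -> is_nash X v ps ->
      is_perturbed_eq X v psi gpsi mu sigma pmu ->
      pbregman psi gpsi ps pmu - pbregman psi gpsi ps sigma
        <= - pbregman psi gpsi pmu sigma)
  /\
  (forall (sigma : nat -> profile R d) (ps : profile R d),
      in_profile X (sigma 0%N) ->
      (forall k, is_perturbed_eq X v psi gpsi mu (sigma k) (sigma k.+1)) ->
      is_nash X v ps ->
      forall k, pbregman psi gpsi ps (sigma k.+1) - pbregman psi gpsi ps (sigma k)
        <= - pbregman psi gpsi (sigma k.+1) (sigma k)).
Proof.
move=> _ _ _ X_convex v_grad mono psi_grad _ mu0.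
have step := perturbed_step_bregman X_convex v_grad psi_grad mono mu0.
split; first by move=> sigma ps pmu _; exact: step.
by move=> sigma ps _ iter nash k; exact: step nash (iter k).
Qed.
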